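(* Let $p,q\geq 2$ be relatively prime integers. For every $c\in A_{pq}^{\mathbb{Z}}$ and all $k,i\in\mathbb{Z}$, the value $F_{p,q}^k(c)(i)$ is uniquely determined by the three values $F_{p,q}^{k-1}(c)(i+1)$, $F_{p,q}^{k}(c)(i+1)$ and $F_{p,q}^{k+1}(c)(i+1)$; that is, if $c,c'\in A_{pq}^{\mathbb{Z}}$ satisfy $F_{p,q}^{m}(c)(i+1)=F_{p,q}^{m}(c')(i+1)$ for $m\in\{k-1,k,k+1\}$, then $F_{p,q}^k(c)(i)=F_{p,q}^k(c')(i)$.
   Context: For an integer $n>1$, $A_n=\{0,1,\dots,n-1\}$. For relatively prime integers $p,q\geq2$ define $g_{p,q}:A_{pq}\times A_{pq}\to A_{pq}$ by writing $x=x_1q+x_0$, $y=y_1q+y_0$ with $x_0,y_0\in A_q$, $x_1,y_1\in A_p$ (uniquely), and setting $g_{p,q}(x,y)=x_0p+y_1$. Define $F_{p,q}:A_{pq}^{\mathbb{Z}}\to A_{pq}^{\mathbb{Z}}$ by $F_{p,q}(c)(i)=g_{p,q}\big(g_{p,q}(c(i-1),c(i)),\,g_{p,q}(c(i),c(i+1))\big)$. The map $F_{p,q}$ is a bijection whose inverse is $F_{q,p}$ (defined by the same formulas with the roles of $p$ and $q$ exchanged); $F_{p,q}^k$ for negative $k$ denotes iterates of the inverse. *)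

From mathcomp Require Import all_boot all_order all_algebra.
Set Implicit Arguments. Unset Strict Implicit. Unset Printing Implicit Defensive.
Import Order.TTheory GRing.Theory Num.Theory.

(* Configurations: maps Z -> A_{pq}, where A_n = {0,...,n-1} is represented by
   naturals (range condition stated separately via [config_in]). *)
Definition config := int -> nat.

Definition config_in (n : nat) (c : config) : Prop := forall i : int, c i < n.

Definition g (p q : nat) (x y : nat) : nat := (x %% q) * p + y %/ q.

Definition F (p q : nat) (c : config) : config :=
  fun i => g p q (g p q (c (i - 1)%R) (c i)) (g p q (c i) (c (i + 1)%R)).

(* F_{p,q}^k for k : int; negative iterates are iterates of the inverse F_{q,p} *)
Definition Fiter (p q : nat) (k : int) (c : config) : config :=
  match k with
  | Posz n => iter n (F p q) c
  | Negz n => iter n.+1 (F q p) c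
  end.

From mathcomp Require Import all_boot all_order all_algebra.
From mathcomp Require Import zify.
From Stdlib Require Import FunctionalExtensionality.
Import Order.TTheory GRing.Theory Num.Theory.
Local Open Scope ring_scope.

(* For [y < p q], the base-[p] digits of [g p q x y] are [x %% q] and [y %/ q].
   Hence for [b = F^(k-1) c] the residue of [F b i] mod [p] is read off the pair
   code [g (b i) (b (i+1))], and its residue mod [q] off the pair code
   [g (F b i) (F b (i+1))]; a pair code [g (a j) (a (j+1))] is in turn determined
   by [a (j+1)] (its residue mod [p]) and [F a (j+1)] (its residue mod [q]).
   The Chinese remainder theorem on [A_(pq)] glues the residues together, and
   negative iterates are handled through [F p q \o F q p = id]. *)

Lemma chinese_remainder_eq {p q x y : nat} : coprime p q ->
  (x < p * q)%N -> (y < p * q)%N ->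
  (x %% p = y %% p)%N -> (x %% q = y %% q)%N -> x = y.
Proof.
move=> co_pq x_lt y_lt eq_p eq_q.
have : (x == y %[mod p * q])%N by rewrite chinese_remainder // eq_p eq_q !eqxx.
by rewrite !modn_small // => /eqP.
Qed.

Section PairCode.
Variables (p q : nat).
Hypotheses (p_gt0 : (0 < p)%N) (q_gt0 : (0 < q)%N).

Lemma g_lt (x y : nat) : (y < p * q)%N -> (g p q x y < p * q)%N.
Proof. by rewrite /g => *; nia. Qed.

Lemma g_modp (x y : nat) : (y < p * q)%N -> (g p q x y %% p = y %/ q)%N.
Proof. by move=> y_lt; rewrite /g modnMDl modn_small // ltn_divLR // mulnC. Qed.

Lemma g_divp (x y : nat) : (y < p * q)%N -> (g p q x y %/ p = x %% q)%N.
Proof.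
by move=> y_lt; rewrite /g divnMDl // divn_small ?addn0 // ltn_divLR // mulnC.
Qed.

Lemma F_config_in {c : config} :
  config_in (p * q) c -> config_in (p * q) (F p q c).
Proof. by move=> c_in i; apply/g_lt/g_lt. Qed.

Lemma F_modp (b : config) (j : int) : config_in (p * q) b ->
  (F p q b j %% p = g p q (b j) (b (j + 1)%R) %/ q)%N.
Proof. by move=> b_in; rewrite /F g_modp // g_lt. Qed.

Lemma F_divp (b : config) (j : int) : config_in (p * q) b ->
  (F p q b (j + 1)%R %/ p = g p q (b j) (b (j + 1)%R) %% q)%N.
Proof. by move=> b_in; rewrite /F g_divp ?addrK // g_lt. Qed.

Hypothesis co_pq : coprime p q.

Lemma pair_code_determined {b b' : config} {j : int} :
  config_in (p * q) b -> config_in (p * q) b' ->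
  b (j + 1) = b' (j + 1) -> F p q b (j + 1) = F p q b' (j + 1) ->
  g p q (b j) (b (j + 1)) = g p q (b' j) (b' (j + 1)).
Proof.
move=> b_in b'_in eq_b eq_Fb.
apply: (chinese_remainder_eq co_pq); rewrite ?g_lt //.
- by rewrite !g_modp // eq_b.
- by rewrite -!F_divp // eq_Fb.
Qed.

Lemma F_determined (b b' : config) (i : int) :
  config_in (p * q) b -> config_in (p * q) b' ->
  b (i + 1) = b' (i + 1) -> F p q b (i + 1) = F p q b' (i + 1) ->
  F p q (F p q b) (i + 1) = F p q (F p q b') (i + 1) ->
  F p q b i = F p q b' i.
Proof.
move=> b_in b'_in eq_b eq_Fb eq_FFb.
have Fb_in := F_config_in b_in; have Fb'_in := F_config_in b'_in.
have F_modq a : config_in (p * q) a ->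
    (F p q a i %% q = g p q (F p q a i) (F p q a (i + 1)%R) %/ p)%N.
  by move=> a_in; rewrite g_divp // F_config_in.
apply: (chinese_remainder_eq co_pq) => //.
- by rewrite !F_modp // (pair_code_determined b_in b'_in eq_b eq_Fb).
- by rewrite !F_modq // (pair_code_determined Fb_in Fb'_in eq_Fb eq_FFb).
Qed.

End PairCode.

Lemma g_swapK (p q x y z : nat) : (0 < p)%N -> (0 < q)%N ->
  (y < p * q)%N -> (z < p * q)%N -> g p q (g q p x y) (g q p y z) = y.
Proof.
rewrite [(p * q)%N]mulnC => p_gt0 q_gt0 y_lt z_lt.
by rewrite {1}/g g_modp ?g_divp // -divn_eq.
Qed.

Lemma F_swap_config_in (p q : nat) (c : config) : (0 < p)%N -> (0 < q)%N ->
  config_in (p * q) c -> config_in (p * q) (F q p c).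
Proof.
by move=> p_gt0 q_gt0 c_in; rewrite mulnC; apply: F_config_in; rewrite // mulnC.
Qed.

Lemma F_swapK (p q : nat) (a : config) : (0 < p)%N -> (0 < q)%N ->
  config_in (p * q) a -> F p q (F q p a) = a.
Proof.
move=> p_gt0 q_gt0 a_in; apply: functional_extensionality => i.
pose w j := g q p (a (j - 1)) (a j).
have w_lt j : (w j < p * q)%N by rewrite mulnC g_lt // mulnC.
have F_w j : F q p a j = g q p (w j) (w (j + 1)) by rewrite /F /w addrK.
have F_pair j : g p q (F q p a (j - 1)) (F q p a j) = w j.
  by rewrite !F_w subrK g_swapK.
have F_pair_next : g p q (F q p a i) (F q p a (i + 1)) = w (i + 1).
  by rewrite -F_pair addrK.
by rewrite {1}/F F_pair F_pair_next /w addrK g_swapK.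
Qed.

Lemma Fiter_config_in (p q : nat) (k : int) (c : config) :
  (0 < p)%N -> (0 < q)%N ->
  config_in (p * q) c -> config_in (p * q) (Fiter p q k c).
Proof.
move=> p_gt0 q_gt0 c_in.
have iter_in f n : (forall a, config_in (p * q) a -> config_in (p * q) (f a)) ->
    config_in (p * q) (iter n f c).
  by move=> f_in; elim: n => [|n IHn] //=; apply: f_in.
case: k => n; apply: iter_in => a; [exact: F_config_in | exact: F_swap_config_in].
Qed.

Lemma FiterS (p q : nat) (k : int) (c : config) : (0 < p)%N -> (0 < q)%N ->
  config_in (p * q) c -> Fiter p q (k + 1) c = F p q (Fiter p q k c).
Proof.
move=> p_gt0 q_gt0 c_in.
case: k => [n|[|n]]; first by rewrite -PoszD addn1.
- by rewrite F_swapK.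
- have -> : Negz n.+1 + 1 = Negz n by lia.
  by rewrite /= F_swapK //; exact: (Fiter_config_in _ _ (Negz n)).
Qed.

Theorem proposition1 (p q : nat) (hp : (2 <= p)%N) (hq : (2 <= q)%N)
  (hpq : coprime p q) (c c' : config)
  (hc : config_in (p * q) c) (hc' : config_in (p * q) c') (k i : int) :
  Fiter p q (k - 1) c (i + 1) = Fiter p q (k - 1) c' (i + 1) ->
  Fiter p q k c (i + 1) = Fiter p q k c' (i + 1) ->
  Fiter p q (k + 1) c (i + 1) = Fiter p q (k + 1) c' (i + 1) ->
  Fiter p q k c i = Fiter p q k c' i.
Proof.
have p_gt0 : (0 < p)%N by apply: leq_trans hp.
have q_gt0 : (0 < q)%N by apply: leq_trans hq.
rewrite !FiterS // -[in Fiter p q k](subrK 1 k) !FiterS //.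
apply: F_determined => //; exact: Fiter_config_in.
Qed.
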